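(* Let $K$ be a field, $P=K[x_1,\dots,x_n]$, $I$ an ideal of $P$ contained in $\mathfrak{M}=\langle x_1,\dots,x_n\rangle$, $\mathfrak{m}=\mathfrak{M}/I$, and let $\overline G$ be a marked reduced Gröbner basis of $I$. (a) $\#\mathrm{LI}(\overline G)\le\dim_K(\mathrm{Lin}_{\mathfrak M}(I))$. (b) $\dim_K(\mathrm{Cot}_{\mathfrak m}(P/I))\le\mathrm{edim}(P/I)\le\mathrm{sepdim}(P/I)\le n-\#\mathrm{LI}(\overline G)$.
   Context: $\mathrm{Cot}_{\mathfrak m}(R)=\mathfrak m/\mathfrak m^2$. For $f\in\mathfrak M$, $\mathrm{Lin}_{\mathfrak M}(f)$ is the homogeneous degree-one part of $f$, and $\mathrm{Lin}_{\mathfrak M}(I)=\langle\mathrm{Lin}_{\mathfrak M}(f)\mid f\in I\rangle_K$. A marked reduced Gröbner basis of $I$ is $\{(\mathrm{LT}_\sigma(g),g)\mid g\in G\}$ with $G$ the reduced $\sigma$-Gröbner basis of $I$ for a term ordering $\sigma$; $\mathrm{LI}(\overline G)$ is the set of indeterminates occurring as marked leading terms in $\overline G$. The embedding dimension $\mathrm{edim}(P/I)$ is the minimal $m$ such that $P/I\cong K[y_1,\dots,y_m]/I'$ as $K$-algebras for some ideal $I'$. For $f\in P$, $\mathrm{indets}(f)$ is the set of indeterminates dividing some term in the support of $f$; for $f\in\mathfrak M$ with $z$ occurring in $\mathrm{Lin}_{\mathfrak M}(f)$ with coefficient $c\ne 0$ in $f$, $\mathrm{tail}_z(f)=z-\frac1cf$,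 and $f$ is $z$-separating if $z\notin\mathrm{indets}(\mathrm{tail}_z(f))$. For distinct indeterminates $Z=\{z_1,\dots,z_s\}$, a tuple $(f_1,\dots,f_s)$ of nonzero elements of $\mathfrak M$ is coherently $Z$-separating if each $f_i$ is $z_i$-separating and $z_i\notin\mathrm{indets}(f_j)$ for $j\ne i$. The separating embedding dimension is $\mathrm{sepdim}(P/I)=n-\max\{\#Z\mid Z\subseteq X,\ I \text{ contains a coherently } Z\text{-separating tuple}\}$ (with $Z=\emptyset$ allowed). *)

From HB Require Import structures.
From mathcomp Require Import all_boot all_order all_algebra.
From mathcomp Require Import generic_quotient ring_quotient.
From mathcomp Require Import mpoly.
From Stdlib Require Import ClassicalDescription.

Set Implicit Arguments.
Unset Strict Implicit.
Unset Printing Implicit Defensive.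

Import Order.TTheory GRing.Theory.
Local Open Scope ring_scope.
Local Open Scope quotient_scope.

Definition asbool (P : Prop) : bool :=
  if excluded_middle_informative P then true else false.

Lemma asboolP (P : Prop) : reflect P (asbool P).
Proof. by rewrite /asbool; case: excluded_middle_informative => h; constructor. Qed.

Section Defs.
Variables (K : fieldType) (n : nat).
Local Notation P := {mpoly K[n]}.

Definition inM (p : P) : Prop :=
  exists h : 'I_n -> P, p = \sum_(i < n) h i * 'X_i.

Definition term_ordering (le : rel 'X_{1..n}) : Prop :=
  [/\ [/\ reflexive le, antisymmetric le, transitive le & total le],
      (forall m, le 0%MM m) &
      (forall m1 m2 m, le m1 m2 -> le (m1 + m)%MM (m2 + m)%MM)].

(* LT_sigma(p): the le-largest term in the support of p (0%MM for p = 0). *)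
Definition LT (le : rel 'X_{1..n}) (p : P) : 'X_{1..n} :=
  foldr (fun m acc => if le acc m then m else acc) 0%MM (msupp p).

(* G is the reduced sigma-Groebner basis of I (le = sigma).
   Term divisibility is (m1 <= m2)%MM. *)
Definition is_reduced_GB (le : rel 'X_{1..n}) (I : idealr P) (G : seq P) : Prop :=
  [/\ forall g, g \in G -> g \in I /\ g != 0,
      (* Groebner basis: leading terms of G generate LT_sigma(I) *)
      forall f, f \in I -> f != 0 -> exists2 g, g \in G & (LT le g <= LT le f)%MM,
      forall g, g \in G -> g@_(LT le g) = 1 &
      forall g g' m, g \in G -> g' \in G -> m \in msupp g ->
        (LT le g' <= m)%MM -> g' = g /\ m = LT le g].

Definition LI (le : rel 'X_{1..n}) (G : seq P) : {set 'I_n} :=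
  [set i : 'I_n | has (fun g => LT le g == U_(i)%MM) G].

(* Lin_M(f) = sum_i f_{x_i} x_i, encoded by its coefficient row vector
   (identifying the linear forms of P with K^n via the basis x_1..x_n). *)
Definition linrow (f : P) : 'rV[K]_n := \row_(i < n) f@_(U_(i)%MM).

Definition LinI (I : idealr P) (v : 'rV[K]_n) : Prop :=
  exists2 f, f \in I & v = linrow f.

Definition is_span (V : {vspace 'rV[K]_n}) (S : 'rV[K]_n -> Prop) : Prop :=
  (forall v, S v -> v \in V) /\
  (forall W : {vspace 'rV[K]_n}, (forall v, S v -> v \in W) -> (V <= W)%VS).

Definition indets (f : P) : {set 'I_n} :=
  [set i : 'I_n | has (fun m : 'X_{1..n} => (0 < m i)%N) (msupp f)].

Definition tail (i : 'I_n) (f : P) : P := 'X_i - (f@_(U_(i)%MM))^-1 *: f.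

Definition separating (i : 'I_n) (f : P) : Prop :=
  [/\ inM f, f@_(U_(i)%MM) != 0 & i \notin indets (tail i f)].

Definition has_coh_sep (I : idealr P) (Z : {set 'I_n}) : Prop :=
  exists F : 'I_n -> P, forall i, i \in Z ->
    [/\ F i \in I, F i != 0, separating i (F i) &
        forall j, j \in Z -> j != i -> i \notin indets (F j)].

Definition sepdim (I : idealr P) : nat :=
  (n - \max_(Z : {set 'I_n} | asbool (has_coh_sep I Z)) #|Z|)%N.

Definition mQ (I : idealr P) (x : {ideal_quot I}) : Prop :=
  exists2 p, inM p & x = \pi_({ideal_quot I}) p.

Definition mQ2 (I : idealr P) (x : {ideal_quot I}) : Prop :=
  exists s : seq ({ideal_quot I} * {ideal_quot I}),
    (forall u, u \in s -> mQ u.1 /\ mQ u.2) /\ x = \sum_(u <- s) u.1 * u.2.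

(* Cot_m(P/I) = m/m^2 contains d K-linearly independent elements
   (the K-action on P/I is c.x = pi(c) * x). *)
Definition cot_free (I : idealr P) (d : nat) : Prop :=
  exists v : 'I_d -> {ideal_quot I}, (forall i, mQ (v i)) /\
    forall c : 'I_d -> K,
      mQ2 (\sum_(i < d) \pi_({ideal_quot I}) ((c i)%:MP) * v i) ->
      forall i, c i = 0.

End Defs.

Definition kalg_iso (K : fieldType) (n m : nat) (I : idealr {mpoly K[n]})
  (I' : idealr {mpoly K[m]}) (f : {ideal_quot I} -> {ideal_quot I'}) : Prop :=
  [/\ forall x y, f (x + y) = f x + f y,
      forall x y, f (x * y) = f x * f y,
      f 1 = 1,
      forall (c : K) x, f (\pi_({ideal_quot I}) (c%:MP) * x)
                        = \pi_({ideal_quot I'}) (c%:MP) * f x &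
      bijective f].

Definition edim_le (K : fieldType) (n : nat) (I : idealr {mpoly K[n]}) (m : nat) : Prop :=
  exists (I' : idealr {mpoly K[m]}) (f : {ideal_quot I} -> {ideal_quot I'}),
    kalg_iso f.

Lemma edim_exists (K : fieldType) (n : nat) (I : idealr {mpoly K[n]}) :
  exists m, asbool (edim_le I m).
Proof.
exists n; apply/asboolP; exists I, id; split=> //; by exists id.
Qed.

Definition edim (K : fieldType) (n : nat) (I : idealr {mpoly K[n]}) : nat :=
  ex_minn (edim_exists I).

(* - For i in LI(G) let g_i be the element of G marked by x_i.  Reducedness
     forces x_i to occur in no other term of G, so the linear parts of the
     g_i form an identity block on the coordinates LI(G): they are linearly
     independent (part (a)), and (g_i)_{i in LI(G)} is a coherently
     LI(G)-separating tuple (sepdim <= n - #LI(G)).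
   - A coherently Z-separating tuple lets one substitute x_i by its tail for
     i in Z, presenting P/I on the #(X \ Z) remaining indeterminates
     (edim <= sepdim).
   - Given any presentation P/I ~ K[y_1..y_k]/I', translating the y_j so that
     they map into m, elements of m independent modulo m^2 have independent
     linear parts in K^k (dim Cot <= edim). *)
From HB Require Import structures.
From mathcomp Require Import all_boot all_order all_algebra.
From mathcomp Require Import generic_quotient ring_quotient.
From mathcomp Require Import mpoly.

Set Implicit Arguments.
Unset Strict Implicit.
Unset Printing Implicit Defensive.

Import GRing.Theory.
Local Open Scope ring_scope.
Local Open Scope quotient_scope.

Lemma mnm1_le (n : nat) (i : 'I_n) (m : 'X_{1..n}) : (U_(i) <= m)%MM = (0 < m i)%N.
Proof.
apply/mnm_lepP/idP => [/(_ i)|mi j]; first by rewrite mnm1E eqxx.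
by rewrite mnm1E; case: eqP => [<-|].
Qed.

Lemma mnm1_inj (n : nat) : injective (fun i : 'I_n => U_(i)%MM).
Proof. by move=> i j /mnmP /(_ i); rewrite !mnm1E eqxx; case: eqP. Qed.

Definition some_indet (n : nat) (m : 'X_{1..n}) : option 'I_n := [pick i | (0 < m i)%N].

Lemma some_indet_None (n : nat) (m : 'X_{1..n}) : some_indet m = None -> m = 0%MM.
Proof.
rewrite /some_indet; case: pickP => // m0 _; apply/mnmP => i.
by rewrite mnm0E; have := m0 i; case: (m i).
Qed.

Lemma some_indet_Some (n : nat) (m : 'X_{1..n}) i :
  some_indet m = Some i -> (m - U_(i) + U_(i))%MM = m.
Proof. by rewrite /some_indet; case: pickP => // j mj [<-]; rewrite submK // mnm1_le. Qed.

Lemma rmorph_eq_on_indets (K : fieldType) (n : nat) (S : comNzRingType)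
    (f1 f2 : {rmorphism {mpoly K[n]} -> S}) (p : {mpoly K[n]}) :
  (forall c, f1 c%:MP = f2 c%:MP) ->
  (forall i, i \in indets p -> f1 'X_i = f2 'X_i) -> f1 p = f2 p.
Proof.
move=> fC fX; rewrite (mpolyE p) !raddf_sum; apply: eq_big_seq => m mp /=.
rewrite -mul_mpolyC !rmorphM fC mpolyXE_id !rmorph_prod; congr (_ * _).
apply: eq_bigr => i _; rewrite !rmorphXn.
have [->|mi] := posnP (m i); first by rewrite !expr0.
by rewrite fX // inE; apply/hasP; exists m.
Qed.

Lemma notin_indets_X (K : fieldType) (n : nat) (i j : 'I_n) :
  j != i -> j \notin indets ('X_i : {mpoly K[n]}).
Proof. by move=> ji; rewrite inE msuppX /= orbF mnm1E eq_sym (negbTE ji). Qed.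

Lemma notin_indets_subZ (K : fieldType) (n : nat) (p q : {mpoly K[n]}) c j :
  j \notin indets p -> j \notin indets q -> j \notin indets (p - c *: q).
Proof.
rewrite !inE => /hasPn jp /hasPn jq; apply/hasPn => m /msuppB_le.
by rewrite mem_cat => /orP [/jp | /msuppZ_le /jq].
Qed.

Lemma inM_coef0 (K : fieldType) (n : nat) (p : {mpoly K[n]}) : inM p <-> p@_0%MM = 0.
Proof.
split=> [[h ->]|p0].
  rewrite raddf_sum big1 // => i _ /=.
  by rewrite (mcoeff0_is_multiplicative _ _).1 mcoeffX mnm1_eq0 mulr0.
exists (fun i => \sum_(m <- msupp p | some_indet m == Some i) p@_m *: 'X_[m - U_(i)]).
symmetry; under eq_bigr => i _ do rewrite mulr_suml.
rewrite (exchange_big_dep xpredT) //= [RHS](mpolyE p); apply: eq_bigr => m _.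
case E: (some_indet m) => [i0|].
  rewrite (big_pred1 i0) => [|i]; last by rewrite eq_sym.
  by rewrite -scalerAl -mpolyXD some_indet_Some.
by rewrite big_pred0 // (some_indet_None E) p0 scale0r.
Qed.

Lemma mmapZ (K : fieldType) (n k : nat) (h : 'I_n -> {mpoly K[k]}) c p :
  mmap (@mpolyC k K) h (c *: p) = c *: mmap (@mpolyC k K) h p.
Proof. by rewrite -!mul_mpolyC rmorphM /= mmapC. Qed.

Section Quotient.
Variables (R : comNzRingType) (I : idealr R).
Local Notation Q := {ideal_quot I}.

Lemma pi_eq0 (x : R) : (\pi_Q x == 0) = (x \in I).
Proof. by rewrite -[x]subr0 Quotient.idealrBE rmorph0 subr0. Qed.

Lemma pi_eq (x y : R) : (\pi_Q x == \pi_Q y) = (x - y \in I).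
Proof. by rewrite -pi_eq0 rmorphB subr_eq0. Qed.

Lemma pi_surj (x : Q) : exists p, x = \pi_Q p.
Proof. by exists (repr x); rewrite reprK. Qed.

End Quotient.

Section Preimage.
Variables (R S : comNzRingType) (a : {rmorphism R -> S}) (I : idealr S).

Definition preimage_pred : {pred R} := [pred q | a q \in I].

Lemma preimage_closed : idealr_closed preimage_pred.
Proof.
split; rewrite ?inE ?rmorph0 ?rmorph1 ?idealr0 ?idealr1 // => c u v.
by rewrite !inE rmorphD rmorphM => uI vI; rewrite rpredD // idealMr.
Qed.

Definition preimage_ideal : idealr R :=
  HB.pack_for (idealr R) preimage_pred (isIdealr.Build R preimage_pred preimage_closed).

Lemma preimage_idealE q : (q \in preimage_ideal) = (a q \in I).
Proof. by []. Qed.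

End Preimage.

Definition rmorph_of (R S : comNzRingType) (f : R -> S)
  (fB : zmod_morphism f) (fM : monoid_morphism f) : {rmorphism R -> S} :=
  HB.pack_for {rmorphism R -> S} f
    (GRing.isZmodMorphism.Build R S f fB) (GRing.isMonoidMorphism.Build R S f fM).

Section LinearLeadingTerms.
Variables (K : fieldType) (n : nat) (I : idealr {mpoly K[n]}).
Variables (le : rel 'X_{1..n}) (G : seq {mpoly K[n]}).
Hypothesis HG : is_reduced_GB le I G.

Definition lin_gen (i : 'I_n) : {mpoly K[n]} :=
  nth 0 G (find (fun g => LT le g == U_(i)%MM) G).

Lemma lin_genP i : i \in LI le G ->
  [/\ lin_gen i \in G, LT le (lin_gen i) = U_(i)%MM, lin_gen i \in I & lin_gen i != 0].
Proof.
rewrite inE => hasi; have giG : lin_gen i \in G by rewrite mem_nth // -has_find.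
have /eqP LTgi := nth_find 0 hasi; case: HG => GI _ _ _.
by have [] := GI _ giG; split.
Qed.

Lemma lin_gen_unique i h m : i \in LI le G -> h \in G -> m \in msupp h ->
  (0 < m i)%N -> h = lin_gen i /\ m = U_(i)%MM.
Proof.
move=> /lin_genP [giG LTgi _ _] hG mh mi; case: HG => _ _ _ red.
have [|<- ->] := red h (lin_gen i) m hG giG mh; first by rewrite LTgi mnm1_le.
by rewrite LTgi.
Qed.

Lemma lin_gen_inj i j : i \in LI le G -> j \in LI le G -> lin_gen i = lin_gen j -> i = j.
Proof.
move=> /lin_genP [_ LTgi _ _] /lin_genP [_ LTgj _ _] gij.
by apply: mnm1_inj; rewrite /= -LTgi -LTgj gij.
Qed.

Lemma lin_gen_coef i j : i \in LI le G -> j \in LI le G ->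
  (lin_gen i)@_(U_(j)%MM) = (i == j)%:R.
Proof.
move=> iLI jLI; have [giG LTgi _ _] := lin_genP iLI.
have [<-|nij] := eqVneq i j.
  by rewrite -LTgi; case: HG => _ _ monic _; rewrite monic.
apply/eqP; rewrite mcoeff_eq0; apply/negP => /(lin_gen_unique jLI giG).
rewrite mnm1E eqxx => /(_ isT) [/lin_gen_inj gij _].
by rewrite gij ?eqxx in nij.
Qed.

Lemma lin_gen_separating (HIM : forall f, f \in I -> inM f) i :
  i \in LI le G -> separating i (lin_gen i).
Proof.
move=> iLI; have [giG _ giI _] := lin_genP iLI.
split; first exact: HIM.
  by rewrite lin_gen_coef // eqxx oner_eq0.
rewrite /tail lin_gen_coef // eqxx invr1 scale1r inE.
apply/hasP => -[m]; rewrite mcoeff_msupp mcoeffB mcoeffX => + mi.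
have [<-|ne] := eqVneq U_(i)%MM m; first by rewrite lin_gen_coef // eqxx subrr eqxx.
rewrite sub0r oppr_eq0 -mcoeff_msupp => mgi.
by have [_ m1] := lin_gen_unique iLI giG mgi mi; rewrite m1 eqxx in ne.
Qed.

Lemma LI_coherent (HIM : forall f, f \in I -> inM f) : has_coh_sep I (LI le G).
Proof.
exists lin_gen => i iLI; have [giG _ giI gi0] := lin_genP iLI.
split=> //; first exact: lin_gen_separating.
move=> j jLI ji; rewrite inE; apply/hasP => -[m mgj mi].
have [gjG _ _ _] := lin_genP jLI.
have [/lin_gen_inj gji _] := lin_gen_unique iLI gjG mgj mi.
by rewrite gji ?eqxx in ji.
Qed.

Definition lin_gen_linrows : #|LI le G|.-tuple 'rV[K]_n :=
  [tuple linrow (lin_gen (@enum_val _ (mem (LI le G)) j)) | j < #|LI le G|].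

Lemma lin_gen_free : free lin_gen_linrows.
Proof.
apply/freeP => k sum0 j; set e := @enum_val _ (mem (LI le G)).
have := congr1 (fun v : 'rV_n => v 0 (e j)) sum0.
rewrite summxE mxE (bigD1 j) //= big1 ?addr0 => [|x xj].
  by rewrite !mxE nth_mktuple mxE lin_gen_coef ?enum_valP // eqxx mulr1.
rewrite !mxE nth_mktuple mxE lin_gen_coef ?enum_valP //.
by rewrite (inj_eq enum_val_inj) (negbTE xj) mulr0.
Qed.

Lemma LI_le_dim_Lin (V : {vspace 'rV[K]_n}) :
  is_span V (LinI I) -> (#|LI le G| <= \dim V)%N.
Proof.
move=> [LinV _]; have XV : (<<lin_gen_linrows>> <= V)%VS.
  apply/span_subvP => v /mapP [j _ ->]; apply: LinV.
  by exists (lin_gen (enum_val j)) => //; have [] := lin_genP (enum_valP j).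
by have := dimvS XV; rewrite (eqP lin_gen_free) size_tuple.
Qed.

End LinearLeadingTerms.

(* Eliminating the indeterminates of Z with a coherently Z-separating tuple
   (f_i)_{i in Z} in I: since f_i = c (x_i - tail_{x_i}(f_i)) and no x_j,
   j in Z, occurs in the tails, P/I is presented on the #(X \ Z)
   remaining indeterminates y_1,...,y_k. *)
Section Elimination.
Variables (K : fieldType) (n : nat) (I : idealr {mpoly K[n]}).
Variables (Z : {set 'I_n}) (F : 'I_n -> {mpoly K[n]}).
Hypothesis HF : forall i, i \in Z -> [/\ F i \in I, F i != 0, separating i (F i) &
  forall j, j \in Z -> j != i -> i \notin indets (F j)].

Local Notation k := #|~: Z|.
Local Notation Q := {ideal_quot I}.

Definition kept (j : 'I_k) : 'I_n := enum_val j.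

Lemma kept_onto i : i \notin Z -> exists j, kept j = i.
Proof.
move=> iZ; have iCZ : i \in ~: Z by rewrite inE.
by exists (enum_rank_in iCZ i); rewrite /kept enum_rankK_in.
Qed.

Definition rename (i : 'I_n) : {mpoly K[k]} :=
  if [pick j | kept j == i] is Some j then 'X_j else 0.

Lemma rename_kept j : rename (kept j) = 'X_j.
Proof.
rewrite /rename; case: pickP => [j' /eqP /enum_val_inj -> // | /(_ j)].
by rewrite eqxx.
Qed.

Definition embed := mmap (@mpolyC n K) (fun j : 'I_k => 'X_(kept j)).
Definition restrict := mmap (@mpolyC k K) rename.
Definition eliminate :=
  mmap (@mpolyC k K) (fun i => if i \in Z then restrict (tail i (F i)) else rename i).

HB.instance Definition _ := GRing.RMorphism.copy embed
  (mmap (@mpolyC n K) (fun j : 'I_k => 'X_(kept j))).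
HB.instance Definition _ := GRing.RMorphism.copy restrict (mmap (@mpolyC k K) rename).
HB.instance Definition _ := GRing.RMorphism.copy eliminate
  (mmap (@mpolyC k K) (fun i => if i \in Z then restrict (tail i (F i)) else rename i)).

Lemma embed_rename i : i \notin Z -> embed (rename i) = 'X_i.
Proof. by move=> /kept_onto [j <-]; rewrite rename_kept /embed mmapX mmap1U. Qed.

Lemma embed_restrict t : (forall i, i \in Z -> i \notin indets t) -> embed (restrict t) = t.
Proof.
move=> tZ; apply: (@rmorph_eq_on_indets K n _ (embed \o restrict) idfun).
  by move=> c /=; rewrite /restrict /embed !mmapC.
move=> i it /=; rewrite /restrict mmapX mmap1U embed_rename //.
by apply/negP => /tZ; rewrite it.
Qed.

Lemma tail_avoids i j : i \in Z -> j \in Z -> j \notin indets (tail i (F i)).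
Proof.
move=> iZ jZ; have [_ _ [_ _ tail_i] _] := HF iZ.
have [->|ji] := eqVneq j i; first exact: tail_i.
apply: notin_indets_subZ; first exact: notin_indets_X.
by have [_ _ _] := HF jZ; apply; rewrite // eq_sym.
Qed.

Lemma embed_eliminate p : \pi_Q (embed (eliminate p)) = \pi_Q p.
Proof.
apply: (@rmorph_eq_on_indets K n _ (\pi_Q \o embed \o eliminate) \pi_Q).
  by move=> c /=; rewrite /eliminate /embed !mmapC.
move=> i _ /=; rewrite /eliminate mmapX mmap1U.
case: ifP => iZ; last by rewrite embed_rename ?iZ.
rewrite embed_restrict => [|j jZ]; last exact: tail_avoids.
have [FI _ _ _] := HF iZ.
by apply/eqP; rewrite pi_eq /tail addrAC subrr sub0r rpredN -mul_mpolyC idealMr.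
Qed.

Definition elim_ideal : idealr {mpoly K[k]} := preimage_ideal embed I.
Local Notation Q' := {ideal_quot elim_ideal}.

Definition elim_map (x : Q) : Q' := \pi_Q' (eliminate (repr x)).
Definition embed_map (y : Q') : Q := \pi_Q (embed (repr y)).

Lemma elim_mapE p : elim_map (\pi_Q p) = \pi_Q' (eliminate p).
Proof.
apply/eqP; rewrite pi_eq preimage_idealE -rmorphB -pi_eq0 embed_eliminate.
by rewrite pi_eq0 -pi_eq reprK.
Qed.

Lemma embed_mapE q : embed_map (\pi_Q' q) = \pi_Q (embed q).
Proof. by apply/eqP; rewrite pi_eq -rmorphB -preimage_idealE -pi_eq reprK. Qed.

Lemma elim_iso : kalg_iso elim_map.
Proof.
split.
- move=> x y; have [p ->] := pi_surj x; have [q ->] := pi_surj y.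
  by rewrite -rmorphD !elim_mapE !rmorphD.
- move=> x y; have [p ->] := pi_surj x; have [q ->] := pi_surj y.
  by rewrite -rmorphM !elim_mapE !rmorphM.
- by rewrite -(rmorph1 \pi_Q) elim_mapE !rmorph1.
- move=> c x; have [p ->] := pi_surj x.
  by rewrite -rmorphM !elim_mapE rmorphM /= /eliminate mmapC rmorphM.
exists embed_map.
- by move=> x; have [p ->] := pi_surj x; rewrite elim_mapE embed_mapE embed_eliminate.
- move=> y; have [q ->] := pi_surj y; rewrite embed_mapE elim_mapE.
  by apply/eqP; rewrite pi_eq preimage_idealE rmorphB -pi_eq embed_eliminate.
Qed.

Lemma elim_edim : edim_le I k.
Proof. by exists elim_ideal, elim_map; exact: elim_iso. Qed.

End Elimination.

(* After translating y_j by the value a_j at the origin of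
   its image in P/I, every element of m is the image of a polynomial without
   constant term, and such a polynomial lies in m^2 as soon as its linear part
   vanishes; so the linear parts of lifts of elements of m that are
   independent modulo m^2 are independent in K^k. *)
Section Cotangent.
Variables (K : fieldType) (n k : nat) (I : idealr {mpoly K[n]}).
Hypothesis HIM : forall f, f \in I -> inM f.
Variable I' : idealr {mpoly K[k]}.
Local Notation Q := {ideal_quot I}.
Local Notation Q' := {ideal_quot I'}.
Variables (f : Q -> Q') (g : Q' -> Q).
Hypotheses (fD : forall x y, f (x + y) = f x + f y)
  (fM : forall x y, f (x * y) = f x * f y) (f1 : f 1 = 1)
  (fZ : forall (c : K) x, f (\pi_Q (c%:MP) * x) = \pi_Q' (c%:MP) * f x)
  (fK : cancel f g) (gK : cancel g f).

Lemma f_additive : zmod_morphism f.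
Proof.
have f0 : f 0 = 0 by apply: (addrI (f 0)); rewrite -fD !addr0.
by move=> x y; rewrite fD; congr (_ + _); apply: (addrI (f y)); rewrite -fD !subrr f0.
Qed.

Definition f_rmorph := rmorph_of f_additive (conj f1 fM).

Lemma g_additive : zmod_morphism g.
Proof. by move=> x y; apply: (can_inj fK); rewrite f_additive !gK. Qed.

Lemma g_multiplicative : monoid_morphism g.
Proof.
split; first by apply: (can_inj fK); rewrite f1 gK.
by move=> x y; apply: (can_inj fK); rewrite fM !gK.
Qed.

Definition g_rmorph := rmorph_of g_additive g_multiplicative.

Lemma g_const c : g (\pi_Q' c%:MP) = \pi_Q c%:MP.
Proof. by apply: (can_inj fK); rewrite gK -[\pi_Q _]mulr1 fZ f1 mulr1. Qed.

(* Evaluation at the origin, well defined on P/I because I is inside M. *)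
Definition origin (x : Q) : K := (repr x)@_0%MM.

Lemma originE p : origin (\pi_Q p) = p@_0%MM.
Proof.
rewrite /origin; apply/eqP; rewrite -subr_eq0 -mcoeffB; apply/eqP.
by apply/inM_coef0/HIM; rewrite -pi_eq reprK.
Qed.

Lemma origin_additive : zmod_morphism origin.
Proof.
move=> x y; have [p ->] := pi_surj x; have [q ->] := pi_surj y.
by rewrite -rmorphB !originE mcoeffB.
Qed.

Lemma origin_multiplicative : monoid_morphism origin.
Proof.
split; first by rewrite -(rmorph1 \pi_Q) originE mcoeff1 eqxx.
move=> x y; have [p ->] := pi_surj x; have [q ->] := pi_surj y.
by rewrite -rmorphM !originE (mcoeff0_is_multiplicative _ _).1.
Qed.

Definition origin_rmorph := rmorph_of origin_additive origin_multiplicative.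

Lemma mQ_origin x : mQ x <-> origin x = 0.
Proof.
split=> [[p /inM_coef0 p0 ->]|]; first by rewrite originE.
by have [p ->] := pi_surj x; rewrite originE => /inM_coef0 pM; exists p.
Qed.

Definition back := g_rmorph \o \pi_Q'.
Definition shift (j : 'I_k) : K := origin (back 'X_j).

Local Notation translate := (mmap (@mpolyC k K) (fun j => 'X_j + (shift j)%:MP)).
Local Notation untranslate := (mmap (@mpolyC k K) (fun j => 'X_j - (shift j)%:MP)).

Lemma translateK p : untranslate (translate p) = p.
Proof.
apply: (@rmorph_eq_on_indets K k _ (untranslate \o translate) idfun).
  by move=> c /=; rewrite !mmapC.
by move=> j _ /=; rewrite mmapX mmap1U rmorphD /= mmapX mmap1U mmapC subrK.
Qed.

Lemma translate_coef0 p : (translate p)@_0%MM = origin (back p).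
Proof.
apply: (@rmorph_eq_on_indets K k _ (mcoeff 0%MM \o translate) (origin_rmorph \o back)).
  by move=> c /=; rewrite mmapC mcoeffC eqxx mulr1 g_const originE mcoeffC eqxx mulr1.
by move=> j _ /=; rewrite mmapX mmap1U mcoeffD mcoeffX mnm1_eq0 add0r mcoeffC eqxx mulr1.
Qed.

Definition centred := back \o untranslate.

Lemma origin_centred p : origin (centred p) = p@_0%MM.
Proof.
apply: (@rmorph_eq_on_indets K k _ (origin_rmorph \o centred) (mcoeff 0%MM)).
  by move=> c /=; rewrite mmapC /= g_const originE !mcoeffC !eqxx.
move=> j _ /=; rewrite mmapX mmap1U rmorphB /= g_additive origin_additive g_const.
by rewrite originE mcoeffC eqxx mulr1 mcoeffX mnm1_eq0 subrr.
Qed.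

Lemma centred_sum (s : seq 'X_{1..k}) (E : 'X_{1..k} -> {mpoly K[k]}) :
  centred (\sum_(m <- s) E m) = \sum_(m <- s) centred (E m).
Proof. exact: (raddf_sum (centred : {rmorphism {mpoly K[k]} -> Q})). Qed.

Lemma centredM x y : centred (x * y) = centred x * centred y.
Proof. exact: (rmorphM (centred : {rmorphism {mpoly K[k]} -> Q})). Qed.

(* A polynomial without constant and linear terms is sent into m^2: each of
   its terms factors as (c y_i) * y^(m - e_i) with both factors in m. *)
Lemma centred_mQ2 r : r@_0%MM = 0 -> (forall j, r@_(U_(j)%MM) = 0) -> mQ2 (centred r).
Proof.
move=> r0 r1.
have indet_of m : m \in msupp r -> {i | some_indet m = Some i}.
  move=> mr; case E: (some_indet m) => [i|]; first by exists i.
  by move: mr; rewrite (some_indet_None E) mcoeff_msupp r0 eqxx.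
pose fac (m : 'X_{1..k}) : Q * Q := if some_indet m is Some i then
  (centred ((r@_m)%:MP * 'X_i), centred 'X_[m - U_(i)]) else (0, 0).
exists [seq fac m | m <- msupp r]; split.
  move=> u /mapP [m mr ->]; rewrite /fac; have [i Ei] := indet_of m mr; rewrite Ei.
  rewrite !mQ_origin !origin_centred mcoeffCM mcoeffX mnm1_eq0 mulr0; split=> //.
  rewrite mcoeffX; case: eqP => // m1; move: mr.
  by rewrite -(some_indet_Some Ei) m1 add0m mcoeff_msupp r1 eqxx.
rewrite big_map {1}[r]mpolyE centred_sum; apply: eq_big_seq => m mr.
rewrite /fac; have [i Ei] := indet_of m mr; rewrite Ei.
by rewrite /= -centredM -mulrA -mpolyXD addmC some_indet_Some // mul_mpolyC.
Qed.

Definition lin_coords (q : {mpoly K[k]}) : 'rV[K]_k := \row_j (translate q)@_(U_(j)%MM).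

Lemma back_mQ2 q : origin (back q) = 0 -> lin_coords q = 0 -> mQ2 (back q).
Proof.
move=> q0 q1; rewrite -[q]translateK; apply: centred_mQ2.
  by rewrite translate_coef0.
by move=> j; have := congr1 (fun v : 'rV_k => v 0 j) q1; rewrite !mxE.
Qed.

Lemma cot_le d : cot_free I d -> (d <= k)%N.
Proof.
move=> [v [vm vfree]]; pose p i := repr (f (v i)).
have fX : free [tuple lin_coords (p i) | i < d].
  apply/freeP => c csum0 i; apply: vfree => {i}.
  pose q := \sum_(i < d) c i *: p i.
  have backq : back q = \sum_(i < d) \pi_Q (c i)%:MP * v i.
    rewrite /back /= -[RHS]fK [f _](rmorph_sum f_rmorph) rmorph_sum; congr (g _).
    by apply: eq_bigr => i _; rewrite /= fZ -mul_mpolyC rmorphM /p /= reprK.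
  rewrite -backq; apply: back_mQ2.
    rewrite backq [origin _](rmorph_sum origin_rmorph) big1 // => i _.
    by rewrite rmorphM /= (proj1 (mQ_origin _) (vm i)) mulr0.
  apply/rowP => j; rewrite -[RHS](congr1 (fun w : 'rV_k => w 0 j) csum0).
  rewrite !mxE summxE /q (raddf_sum translate) raddf_sum; apply: eq_bigr => i _.
  by rewrite /= mmapZ mcoeffZ !mxE nth_mktuple mxE.
have := dimvS (subvf <<[tuple lin_coords (p i) | i < d]>>).
by rewrite (eqP fX) dimvf size_tuple /dim /= mul1n.
Qed.

End Cotangent.

Section Extrema.
Variables (K : fieldType) (n : nat) (I : idealr {mpoly K[n]}).

Lemma edimP : edim_le I (edim I).
Proof. by rewrite /edim; case: ex_minnP => m /asboolP. Qed.

Lemma edim_min m : edim_le I m -> (edim I <= m)%N.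
Proof. by rewrite /edim; case: ex_minnP => e _ emin /asboolP /emin. Qed.

Lemma sepdim_le Z : has_coh_sep I Z -> (sepdim I <= n - #|Z|)%N.
Proof.
move=> /asboolP ZI; rewrite /sepdim leq_sub2l //.
exact: (@leq_bigmax_cond _ (fun Z => asbool (has_coh_sep I Z)) (fun Z => #|Z|)).
Qed.

Lemma sepdim_attained : exists2 Z, has_coh_sep I Z & sepdim I = #|~: Z|.
Proof.
have set0_sep : asbool (has_coh_sep I set0).
  by apply/asboolP; exists (fun _ => 0) => i; rewrite in_set0.
have [|Z /asboolP ZI sepZ] :=
  @eq_bigmax_cond _ (fun Z => asbool (has_coh_sep I Z)) (fun Z => #|Z|).
  by apply/card_gt0P; exists set0.
by exists Z; rewrite // /sepdim sepZ [RHS]cardsCs setCK card_ord.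
Qed.

End Extrema.

Theorem theorem4p1 (K : fieldType) (n : nat) (I : idealr {mpoly K[n]})
  (HIM : forall f, f \in I -> inM f)
  (le : rel 'X_{1..n}) (Hle : term_ordering le)
  (G : seq {mpoly K[n]}) (HG : is_reduced_GB le I G) :
  (* (a)  #LI(G) <= dim_K Lin_M(I) *)
  (forall V : {vspace 'rV[K]_n}, is_span V (LinI I) -> (#|LI le G| <= \dim V)%N) /\
  (* (b)  dim_K Cot_m(P/I) <= edim(P/I) <= sepdim(P/I) <= n - #LI(G) *)
  [/\ (forall d, cot_free I d -> (d <= edim I)%N),
      (edim I <= sepdim I)%N &
      (sepdim I <= n - #|LI le G|)%N].
Proof.
split; first exact: LI_le_dim_Lin.
split.
- have [I' [f [fD fM f1 fZ [g fK gK]]]] := edimP I.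
  by move=> d; apply: (cot_le HIM fD fM f1 fZ fK gK).
- have [Z [F HF] ->] := sepdim_attained I.
  exact/edim_min/(elim_edim HF).
- exact/sepdim_le/LI_coherent.
Qed.
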